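(* The left-join operator $⟕_F$ of the W3C SPARQL algebra is expressible in the core SPARQL algebra. That is, there is an expression built only from projection, selection, join, union and simple difference which, for every selection formula $F$ and all multisets of mappings $\Omega_1,\Omega_2$, evaluates to $\Omega_1 \,⟕_F\, \Omega_2$, with the same multiplicities.
   Context: Fix pairwise disjoint infinite sets $I$ (IRIs), $L$ (literals) and $V$ (variables), and let $T=I\cup L$. Solution mappings. A mapping is a partial function $\mu:V\to T$ with domain $\operatorname{dom}(\mu)$. Mappings $\mu_1,\mu_2$ are compatible ($\mu_1\sim\mu_2$) if they agree on every variable in $\operatorname{dom}(\mu_1)\cap\operatorname{dom}(\mu_2)$; then $\mu_1\cup\mu_2$ is a mapping. The restriction $\mu_{|W}$ of $\mu$ to $W\subseteq V$ is $\mu$ restricted to $\operatorname{dom}(\mu)\cap W$. Selection formulas. The atomic ones are $(?X=c)$, $(?X=?Y)$ and $\operatorname{bound}(?X)$, for $?X,?Y\in V$ and $c\in I\cup L$; they are closed under $\land$, $\lor$ and $\neg$. The value $\mu(F)\in\{\mathit{true},\mathit{false},\mathit{error}\}$ is defined as follows. - $(?X=c)$ and $(?X=?Y)$ are $\mathit{error}$ if some mentioned variable is outside $\operatorname{dom}(\mu)$; otherwise they are $\mathit{true}$ or $\mathit{false}$ according to equality. - $\operatorname{bound}(?X)$ is $\mathit{true}$ iff $?X\in\operatorname{dom}(\mu)$, and $\mathit{false}$ otherwise. - $\land$ is $\mathit{false}$ if some argument is $\mathit{false}$; else $\mathit{error}$ if some argument is $\mathit{error}$; else $\mathit{true}$.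 - $\lor$ is $\mathit{true}$ if some argument is $\mathit{true}$; else $\mathit{error}$ if some argument is $\mathit{error}$; else $\mathit{false}$. - $\neg$ swaps $\mathit{true}$ and $\mathit{false}$ and keeps $\mathit{error}$. Multisets. A multiset $\Omega$ of mappings assigns multiplicities $\mathrm{card}_\Omega(\mu)\ge0$. Operations, for multisets $\Omega_1,\Omega_2$. - Projection: $\pi_W(\Omega_1)$ is the multiset of restrictions $\mu_{|W}$ for $\mu\in\Omega_1$, with multiplicities summed. - Selection: $\sigma_F(\Omega_1)$ keeps the $\mu\in\Omega_1$ with $\mu(F)=\mathit{true}$, with multiplicities kept. - Join: $\Omega_1\Join\Omega_2$ is the multiset of $\mu_1\cup\mu_2$ for compatible $\mu_1\in\Omega_1$, $\mu_2\in\Omega_2$, where $\mathrm{card}(\mu)=\sum_{\mu=\mu_1\cup\mu_2}\mathrm{card}_{\Omega_1}(\mu_1)\,\mathrm{card}_{\Omega_2}(\mu_2)$. - Union: $\Omega_1\cup\Omega_2$, with multiplicities added. - Difference: $\Omega_1\setminus_F\Omega_2=\{\mu_1\in\Omega_1\mid\forall\mu_2\in\Omega_2,\ \mu_1\nsim\mu_2\lor(\mu_1\sim\mu_2\land(\mu_1\cup\mu_2)(F)=\mathit{false})\}$, with multiplicities as in $\Omega_1$. - Left-join: $\Omega_1\,⟕_F\,\Omega_2=\sigma_F(\Omega_1\Join\Omega_2)\cup(\Omega_1\setminus_F\Omega_2)$, with multiplicities added. - Simple difference: $\Omega_1\setminus\Omega_2=\{\mu_1\in\Omega_1\mid\forall\mu_2\in\Omega_2,\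 \mu_1\nsim\mu_2\}$, with multiplicities as in $\Omega_1$. The core SPARQL algebra consists of projection, selection, join, union and simple difference. An operator $O$ is expressible in a language $L$ iff some subset of the operators of $L$ can express the same queries as $O$. *)

(* SPARQL multiset algebra (W3C semantics) over abstract
   IRIs I, literals L, variables V.  Terms T = I + L (disjoint union). *)
From Stdlib Require Import List Classical ClassicalEpsilon.
Import ListNotations.
Set Implicit Arguments.

Definition infinite_type (X : Type) : Prop :=
  exists f : nat -> X, forall n m, f n = f m -> n = m.

Definition dec (P : Prop) : bool :=
  if excluded_middle_informative P then true else false.

Section Sparql.
Variables (I L V : Type).

Definition term := (I + L)%type.

Definition mapping := V -> option term.

Definition in_dom (m : mapping) (x : V) : Prop := m x <> None.

Definition compatible (m1 m2 : mapping) : Prop :=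
  forall x t1 t2, m1 x = Some t1 -> m2 x = Some t2 -> t1 = t2.

(** union of mappings (meaningful for compatible mappings) *)
Definition munion (m1 m2 : mapping) : mapping :=
  fun x => match m1 x with Some t => Some t | None => m2 x end.

Definition restrict (W : V -> Prop) (m : mapping) : mapping :=
  fun x => if dec (W x) then m x else None.

Inductive formula : Type :=
| FEqC   : V -> term -> formula
| FEqV   : V -> V -> formula
| FBound : V -> formula
| FAnd   : formula -> formula -> formula
| FOr    : formula -> formula -> formula
| FNot   : formula -> formula.

Inductive tv : Type := TTrue | TFalse | TError.

Definition tand (a b : tv) : tv :=
  match a, b with
  | TFalse, _ | _, TFalse => TFalse
  | TError, _ | _, TError => TError
  | TTrue, TTrue => TTrue
  end.

Definition tor (a b : tv) : tv :=
  match a, b with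
  | TTrue, _ | _, TTrue => TTrue
  | TError, _ | _, TError => TError
  | TFalse, TFalse => TFalse
  end.

Definition tnot (a : tv) : tv :=
  match a with TTrue => TFalse | TFalse => TTrue | TError => TError end.

Fixpoint feval (m : mapping) (F : formula) : tv :=
  match F with
  | FEqC x c =>
      match m x with
      | None => TError
      | Some t => if dec (t = c) then TTrue else TFalse
      end
  | FEqV x y =>
      match m x, m y with
      | Some t, Some u => if dec (t = u) then TTrue else TFalse
      | _, _ => TError
      end
  | FBound x => match m x with Some _ => TTrue | None => TFalse end
  | FAnd F1 F2 => tand (feval m F1) (feval m F2)
  | FOr F1 F2 => tor (feval m F1) (feval m F2)
  | FNot F1 => tnot (feval m F1)
  end.

(** Finite multisets of mappings, represented by lists; the multiplicity of
    a mapping is its number of occurrences. *)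
Definition mset := list mapping.

Definition card (O : mset) (m : mapping) : nat :=
  length (filter (fun n => dec (n = m)) O).

Definition mset_eq (O1 O2 : mset) : Prop := forall m, card O1 m = card O2 m.

Definition proj (W : V -> Prop) (O : mset) : mset := map (restrict W) O.

Definition sel (F : formula) (O : mset) : mset :=
  filter (fun m => dec (feval m F = TTrue)) O.

Definition join (O1 O2 : mset) : mset :=
  flat_map (fun m1 =>
    flat_map (fun m2 => if dec (compatible m1 m2) then [munion m1 m2] else [])
      O2) O1.

Definition munion_ms (O1 O2 : mset) : mset := O1 ++ O2.

Definition diffF (F : formula) (O1 O2 : mset) : mset :=
  filter (fun m1 => dec (forall m2, In m2 O2 ->
            ~ compatible m1 m2 \/
            (compatible m1 m2 /\ feval (munion m1 m2) F = TFalse))) O1.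

Definition leftjoin (F : formula) (O1 O2 : mset) : mset :=
  munion_ms (sel F (join O1 O2)) (diffF F O1 O2).

Definition sdiff (O1 O2 : mset) : mset :=
  filter (fun m1 => dec (forall m2, In m2 O2 -> ~ compatible m1 m2)) O1.

(** Expressions of the core SPARQL algebra (projection, selection, join,
    union, simple difference) over two input multisets. *)
Inductive cexpr : Type :=
| EIn1  : cexpr
| EIn2  : cexpr
| EProj : (V -> Prop) -> cexpr -> cexpr
| ESel  : formula -> cexpr -> cexpr
| EJoin : cexpr -> cexpr -> cexpr
| EUnion : cexpr -> cexpr -> cexpr
| EDiff : cexpr -> cexpr -> cexpr.

Fixpoint ceval (e : cexpr) (O1 O2 : mset) : mset :=
  match e with
  | EIn1 => O1
  | EIn2 => O2
  | EProj W e1 => proj W (ceval e1 O1 O2)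
  | ESel F e1 => sel F (ceval e1 O1 O2)
  | EJoin e1 e2 => join (ceval e1 O1 O2) (ceval e2 O1 O2)
  | EUnion e1 e2 => munion_ms (ceval e1 O1 O2) (ceval e2 O1 O2)
  | EDiff e1 e2 => sdiff (ceval e1 O1 O2) (ceval e2 O1 O2)
  end.

End Sparql.

(* The join part of the left join is already a core expression; only the
   difference Ω1 ∖_F Ω2 needs work.  A mapping μ1 of Ω1 survives it iff no
   compatible μ2 makes F non-false on μ1 ∪ μ2, i.e. iff μ1 is incompatible
   with every member of σ_G(Ω1 ⋈ Ω2), where G is an error-free formula true
   exactly when F is not false.  This fails in general, because μ1 may be
   compatible with μ1' ∪ μ2 for another μ1' of Ω1 on which F behaves
   differently.  It holds, however, as soon as all mappings of Ω1 bind the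
   same variables of F, since then F takes the same value on μ1 ∪ μ2 and on
   μ1' ∪ μ2.  Splitting Ω1 by selections on bound(?x), for the variables ?x
   of F, into such blocks and taking the union of the blocks' differences
   gives the expression. *)
From Stdlib Require Import List Classical ClassicalEpsilon Lia.
Import ListNotations.

#[local] Arguments FBound {I L V} _.
#[local] Arguments EIn1 {I L V}.
#[local] Arguments EIn2 {I L V}.

Lemma dec_true (P : Prop) : dec P = true <-> P.
Proof.
  unfold dec; destruct (excluded_middle_informative P); split; easy.
Qed.

Lemma dec_false (P : Prop) : dec P = false <-> ~ P.
Proof.
  unfold dec; destruct (excluded_middle_informative P); split; easy.
Qed.

Lemma dec_iff (P Q : Prop) : (P <-> Q) -> dec P = dec Q.
Proof.
  intros HPQ; unfold dec.
  destruct (excluded_middle_informative P), (excluded_middle_informative Q); tauto.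
Qed.

Section CoreLeftJoin.
Variables (I L V : Type).

Notation mapping := (mapping I L V).
Notation mset := (mset I L V).
Notation formula := (formula I L V).

Lemma card_app (O O' : mset) m : card (O ++ O') m = card O m + card O' m.
Proof. unfold card; rewrite filter_app, length_app; reflexivity. Qed.

Lemma card_filter_partition (p q r : mapping -> bool) (O : mset) m :
  (forall x, r x = negb (q x)) ->
  card (filter p (filter q O)) m + card (filter p (filter r O)) m = card (filter p O) m.
Proof.
  intros Hr; unfold card; induction O as [|a O IH]; simpl; [reflexivity|].
  rewrite Hr; destruct (q a); simpl; destruct (p a); simpl; try destruct (dec (a = m)); simpl; lia.
Qed.

Fixpoint fv (F : formula) : list V :=
  match F with
  | FEqC x _ => [x]
  | FEqV _ _ x y => [x; y]
  | FBound x => [x]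
  | FAnd F1 F2 | FOr F1 F2 => fv F1 ++ fv F2
  | FNot F1 => fv F1
  end.

Lemma feval_eq_on_fv (F : formula) (m m' : mapping) :
  (forall x, In x (fv F) -> m x = m' x) -> feval m F = feval m' F.
Proof.
  induction F; simpl; intros Hfv;
    repeat match goal with |- context [m ?x] => rewrite (Hfv x) by (simpl; auto) end;
    try reflexivity.
  - rewrite IHF1, IHF2; auto; intros; apply Hfv, in_or_app; auto.
  - rewrite IHF1, IHF2; auto; intros; apply Hfv, in_or_app; auto.
  - rewrite IHF; auto.
Qed.

Definition tv_is_true (t : tv) : tv := match t with TTrue => TTrue | _ => TFalse end.
Definition tv_is_false (t : tv) : tv := match t with TFalse => TTrue | _ => TFalse end.

(* Guarding each atom by bound(..) and pushing negations to the atoms yields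
   formulas that never evaluate to error; [fst] is true iff F is true and
   [snd] is true iff F is false. *)
Fixpoint truth_formulas (F : formula) : formula * formula :=
  match F with
  | FEqC x c => (FAnd (FBound x) (FEqC x c), FAnd (FBound x) (FNot (FEqC x c)))
  | FEqV _ _ x y =>
      (FAnd (FAnd (FBound x) (FBound y)) (FEqV I L x y),
       FAnd (FAnd (FBound x) (FBound y)) (FNot (FEqV I L x y)))
  | FBound x => (FBound x, FNot (FBound x))
  | FAnd F1 F2 =>
      (FAnd (fst (truth_formulas F1)) (fst (truth_formulas F2)),
       FOr (snd (truth_formulas F1)) (snd (truth_formulas F2)))
  | FOr F1 F2 =>
      (FOr (fst (truth_formulas F1)) (fst (truth_formulas F2)),
       FAnd (snd (truth_formulas F1)) (snd (truth_formulas F2)))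
  | FNot F1 => (snd (truth_formulas F1), fst (truth_formulas F1))
  end.

Lemma feval_truth_formulas (F : formula) (m : mapping) :
  feval m (fst (truth_formulas F)) = tv_is_true (feval m F) /\
  feval m (snd (truth_formulas F)) = tv_is_false (feval m F).
Proof.
  induction F as [x c|x y|x|F1 [IH1t IH1f] F2 [IH2t IH2f]|F1 [IH1t IH1f] F2 [IH2t IH2f]
                 |F1 [IHt IHf]]; simpl.
  - destruct (m x); simpl; [destruct (dec _)|]; auto.
  - destruct (m x), (m y); simpl; try destruct (dec _); auto.
  - destruct (m x); auto.
  - rewrite IH1t, IH1f, IH2t, IH2f; destruct (feval m F1), (feval m F2); auto.
  - rewrite IH1t, IH1f, IH2t, IH2f; destruct (feval m F1), (feval m F2); auto.
  - rewrite IHt, IHf; destruct (feval m F1); auto.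
Qed.

Definition not_false (F : formula) : formula := FNot (snd (truth_formulas F)).

Lemma feval_not_false (F : formula) (m : mapping) :
  feval m (not_false F) = TTrue <-> feval m F <> TFalse.
Proof.
  unfold not_false; simpl; rewrite (proj2 (feval_truth_formulas F m)).
  destruct (feval m F); simpl; split; congruence.
Qed.

Lemma compatible_munion_l (m1 m2 : mapping) : compatible m1 (munion m1 m2).
Proof. intros x t1 t2 H1 H2; unfold munion in H2; rewrite H1 in H2; congruence. Qed.

Lemma compatible_of_munion (m m' m2 : mapping) :
  compatible m' m2 -> compatible m (munion m' m2) -> compatible m m2.
Proof.
  intros Hm'm2 Hm x t1 t2 H1 H2; apply (Hm x); auto; unfold munion.
  destruct (m' x) eqn:E; [f_equal; eapply Hm'm2; eauto | assumption].
Qed.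

Lemma In_join (O1 O2 : mset) m1 m2 :
  In m1 O1 -> In m2 O2 -> compatible m1 m2 -> In (munion m1 m2) (join O1 O2).
Proof.
  intros H1 H2 C; apply in_flat_map; exists m1; split; [assumption|].
  apply in_flat_map; exists m2; split; [assumption|].
  rewrite (proj2 (dec_true _) C); left; reflexivity.
Qed.

Lemma In_joinE (O1 O2 : mset) m :
  In m (join O1 O2) ->
  exists m1 m2, In m1 O1 /\ In m2 O2 /\ compatible m1 m2 /\ m = munion m1 m2.
Proof.
  intros Hm; apply in_flat_map in Hm as [m1 [H1 Hm]]; apply in_flat_map in Hm as [m2 [H2 Hm]].
  destruct (dec (compatible m1 m2)) eqn:D; [|destruct Hm].
  destruct Hm as [<-|[]]; exists m1, m2; repeat split; auto; apply dec_true; assumption.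
Qed.

Definition same_domain_on (T : list V) (O : mset) : Prop :=
  forall m m', In m O -> In m' O -> forall x, In x T -> (m x = None <-> m' x = None).

Lemma feval_munion_same_domain (F : formula) (m m' m2 : mapping) :
  (forall x, In x (fv F) -> (m x = None <-> m' x = None)) ->
  compatible m (munion m' m2) ->
  feval (munion m m2) F = feval (munion m' m2) F.
Proof.
  intros Hdom Hm; apply feval_eq_on_fv; intros x Hx; unfold munion.
  specialize (Hdom x Hx); destruct (m x) as [t|] eqn:E, (m' x) as [t'|] eqn:E'.
  - f_equal; apply (Hm x); auto; unfold munion; rewrite E'; reflexivity.
  - discriminate (proj2 Hdom eq_refl).
  - discriminate (proj1 Hdom eq_refl).
  - reflexivity.
Qed.

Lemma diffF_same_domain (F : formula) (O O2 : mset) :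
  same_domain_on (fv F) O ->
  sdiff O (sel (not_false F) (join O O2)) = diffF F O O2.
Proof.
  intros Hdom; unfold sdiff, diffF; apply filter_ext_in; intros m1 Hm1; apply dec_iff; split.
  - intros Hinc m2 Hm2; destruct (classic (compatible m1 m2)) as [C|C]; [right|left; auto].
    split; [assumption|].
    destruct (feval (munion m1 m2) F) eqn:E; try reflexivity; exfalso;
      apply (Hinc (munion m1 m2)); try apply compatible_munion_l;
      apply filter_In; split; try (apply In_join; assumption);
      apply dec_true, feval_not_false; congruence.
  - intros Hsurv m Hm Cm; apply filter_In in Hm as [Hm Gm].
    apply In_joinE in Hm as [m1' [m2 [Hm1' [Hm2 [C' ->]]]]].
    apply (proj1 (dec_true _)), feval_not_false in Gm.
    destruct (Hsurv m2 Hm2) as [NC|[_ Hfalse]].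
    + exact (NC (compatible_of_munion _ _ _ C' Cm)).
    + apply Gm; rewrite <- Hfalse; symmetry.
      apply feval_munion_same_domain; auto; intros x Hx; apply Hdom; auto.
Qed.

Lemma sel_not_bound (x : V) (m : mapping) :
  dec (feval m (FNot (FBound x)) = TTrue) = negb (dec (feval m (FBound x) = TTrue)).
Proof.
  simpl; destruct (m x); simpl;
    rewrite (proj2 (dec_true (TTrue = TTrue))), (proj2 (dec_false (TFalse = TTrue)));
    solve [reflexivity | discriminate].
Qed.

Lemma same_domain_on_sel_bound (T : list V) (O : mset) (x : V) (B : formula) :
  B = FBound x \/ B = FNot (FBound x) ->
  same_domain_on T O -> same_domain_on (x :: T) (sel B O).
Proof.
  intros HB Hdom m m' Hm Hm' y Hy.
  apply filter_In in Hm as [Hm Bm]; apply filter_In in Hm' as [Hm' Bm'].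
  apply (proj1 (dec_true _)) in Bm; apply (proj1 (dec_true _)) in Bm'.
  destruct Hy as [<-|Hy]; [|apply Hdom; auto].
  destruct HB as [->| ->]; simpl in Bm, Bm';
    destruct (m x), (m' x); simpl in *; solve [discriminate | split; congruence].
Qed.

Fixpoint split_diff (F : formula) (S : list V) (e : cexpr I L V) : cexpr I L V :=
  match S with
  | [] => EDiff e (ESel (not_false F) (EJoin e EIn2))
  | x :: S' =>
      EUnion (split_diff F S' (ESel (FBound x) e)) (split_diff F S' (ESel (FNot (FBound x)) e))
  end.

Lemma ceval_split_diff (F : formula) (S : list V) :
  forall (T : list V) (e : cexpr I L V) (O1 O2 : mset),
  (forall x, In x (fv F) -> In x T \/ In x S) ->
  same_domain_on T (ceval e O1 O2) ->
  mset_eq (ceval (split_diff F S e) O1 O2) (diffF F (ceval e O1 O2) O2).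
Proof.
  induction S as [|x S IH]; intros T e O1 O2 Hcover Hdom m.
  - simpl; rewrite diffF_same_domain; [reflexivity|].
    intros m1 m1' H1 H1' y Hy; apply Hdom; auto.
    destruct (Hcover y Hy) as [|[]]; assumption.
  - assert (Hcover' : forall y, In y (fv F) -> In y (x :: T) \/ In y S).
    { intros y Hy; destruct (Hcover y Hy) as [|[<-|]]; simpl; auto. }
    simpl ceval; unfold munion_ms; rewrite card_app.
    rewrite (IH (x :: T)), (IH (x :: T)); auto;
      try (apply same_domain_on_sel_bound; auto).
    unfold diffF, sel; apply card_filter_partition; apply sel_not_bound.
Qed.

Definition leftjoin_expr (F : formula) : cexpr I L V :=
  EUnion (ESel F (EJoin EIn1 EIn2)) (split_diff F (fv F) EIn1).

Lemma ceval_leftjoin_expr (F : formula) (O1 O2 : mset) :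
  mset_eq (ceval (leftjoin_expr F) O1 O2) (leftjoin F O1 O2).
Proof.
  intros m; simpl; unfold leftjoin, munion_ms; rewrite !card_app; f_equal.
  apply (ceval_split_diff F (fv F) [] EIn1); [intros; right; assumption|].
  intros m1 m1' _ _ x [].
Qed.

End CoreLeftJoin.

Theorem lemma2 (I L V : Type)
  (HI : infinite_type I) (HL : infinite_type L) (HV : infinite_type V) :
  forall F : formula I L V,
  exists e : cexpr I L V,
  forall O1 O2 : mset I L V,
    mset_eq (ceval e O1 O2) (leftjoin F O1 O2).
Proof.
  (* The construction works for arbitrary I, L and V. *)
  intros F; exists (leftjoin_expr I L V F); apply ceval_leftjoin_expr.
Qed.
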